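(* There are infinitely many positive integers $N$ such that there is exactly one pair $(A,B)$ of antipalindromic numbers with $N=A/B$.
   Context: A positive integer $n$ is antipalindromic if its binary representation $w=w_1\cdots w_L$ (most significant digit first, no leading zeros) has even length $L$ and satisfies $w_i+w_{L+1-i}=1$ for all $i$. *)

From mathcomp Require Import all_boot.
Set Implicit Arguments. Unset Strict Implicit. Unset Printing Implicit Defensive.

Definition bin_digits (n : nat) : seq nat :=
  if n == 0 then [::]
  else rev [seq nat_of_bool (odd (n %/ 2 ^ j)) | j <- iota 0 (trunc_log 2 n).+1].

(* w = w_1 ... w_L (w_i = nth 0 w (i-1)); antipalindromic: L even and
   w_i + w_{L+1-i} = 1 for all 1 <= i <= L. *)
Definition antipalindromic (n : nat) : bool :=
  let w := bin_digits n in
  let L := size w in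
  [&& 0 < n, ~~ odd L &
      all (fun i => nth 0 w i + nth 0 w (L - 1 - i) == 1) (iota 0 L)].

Example antipal_test : antipalindromic 2 && antipalindromic 12 && ~~ antipalindromic 3
  && antipalindromic 10 && ~~ antipalindromic 9.
Proof. by []. Qed.

From mathcomp Require Import all_boot zify.
Set Implicit Arguments. Unset Strict Implicit. Unset Printing Implicit Defensive.

(* Let N = 1 + 4 + ... + 4^(k+1), so that 3N + 1 = 4^(k+2); the binary expansion
   of 2N is 1010...10, which is antipalindromic, giving the pair (2N, 2).
   Conversely let A = N B with A, B antipalindromic and B <> 2, so B has at least
   four bits.  The three leading bits of an antipalindromic number are 1 followed
   by the complements of its bits 1 and 2.  As N = 1 mod 4 and B is even,
   A = B mod 8, so A and B share these leading bits t in [4, 8); their lengths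
   have the same parity, hence A / B lies strictly between t/(t+1) 4^e and
   (t+1)/t 4^e for some e.  But N is about 4^(k+2)/3, which differs from every
   power of 4 by a factor of at least about 4/3 > 5/4. *)

Definition bit_length (n : nat) : nat := (trunc_log 2 n).+1.

Definition bit (n i : nat) : bool := odd (n %/ 2 ^ i).

Lemma bit_length_bounds n : 0 < n -> 2 ^ (bit_length n).-1 <= n < 2 ^ bit_length n.
Proof. exact: trunc_log_bounds. Qed.

Lemma bit_length_eq n m : 2 ^ m <= n < 2 ^ m.+1 -> bit_length n = m.+1.
Proof. by move=> bounds; rewrite /bit_length (trunc_log_eq _ bounds). Qed.

Lemma leq_bit_length m n : m <= n -> bit_length m <= bit_length n.
Proof. exact: leq_trunc_log. Qed.

Lemma bit_divn n p i : bit (n %/ 2 ^ p) i = bit n (p + i).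
Proof. by rewrite /bit -divnMA -expnD. Qed.

Lemma bit_top n : 0 < n -> bit n (bit_length n).-1.
Proof.
move=> n_gt0; have /andP[lo hi] := bit_length_bounds n_gt0.
rewrite /bit; suff -> : n %/ 2 ^ (bit_length n).-1 = 1 by [].
apply/eqP; rewrite eqn_leq leq_divRL ?expn_gt0 // mul1n lo andbT.
by rewrite -ltnS ltn_divLR ?expn_gt0 // -expnS.
Qed.

Lemma bit_eqmod a b i j : i < j -> a = b %[mod 2 ^ j] -> bit a i = bit b i.
Proof.
move=> lt_ij eq_ab; have bitE n : bit n i = odd (n %% 2 ^ j %% 2 ^ i.+1 %/ 2 ^ i).
  by rewrite modn_dvdm ?dvdn_exp2l // expnS -modn_divl modn2 oddb.
by rewrite !bitE eq_ab.
Qed.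

Lemma three_bits y : y < 8 -> y = 4 * bit y 2 + 2 * bit y 1 + bit y 0.
Proof. by do 8?[case: y => [|y] //]. Qed.

Lemma size_bin_digits n : 0 < n -> size (bin_digits n) = bit_length n.
Proof.
by rewrite /bin_digits; case: eqP => [->|_ _]; rewrite ?size_rev ?size_map ?size_iota.
Qed.

Lemma nth_bin_digits n i : 0 < n -> i < bit_length n ->
  nth 0 (bin_digits n) i = bit n (bit_length n - 1 - i).
Proof.
rewrite /bin_digits /bit_length; case: eqP => [-> //|_ _ lt_iL].
rewrite nth_rev ?size_map ?size_iota // (nth_map 0) ?size_iota; last by lia.
by rewrite nth_iota; [congr (nat_of_bool (odd (n %/ 2 ^ _))); lia | lia].
Qed.

Lemma antipalindromicP n : antipalindromic n <->
  [/\ 0 < n, ~~ odd (bit_length n) &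
      forall i, i < bit_length n -> bit n i = ~~ bit n (bit_length n - 1 - i)].
Proof.
rewrite /antipalindromic; set L := bit_length n.
have mirrorK i : i < L -> L - 1 - (L - 1 - i) = i by lia.
have digit_sum i : 0 < n -> i < L ->
    (nth 0 (bin_digits n) i + nth 0 (bin_digits n) (L - 1 - i) == 1)
    = (bit n i == ~~ bit n (L - 1 - i)).
  move=> n_gt0 lt_iL; rewrite !nth_bin_digits ?mirrorK //; last by lia.
  by case: (bit n i); case: (bit n (L - 1 - i)).
split.
- case/and3P=> n_gt0; rewrite size_bin_digits // => evenL /allP digitsP.
  split=> // i lt_iL; apply/eqP; rewrite -digit_sum //.
  by apply: digitsP; rewrite mem_iota.
- case=> n_gt0 evenL bitsP; rewrite n_gt0 size_bin_digits // evenL.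
  by apply/allP=> i; rewrite mem_iota /= => lt_iL; rewrite digit_sum // bitsP.
Qed.

Lemma antipalindromic_even n : antipalindromic n -> ~~ odd n.
Proof.
case/antipalindromicP=> n_gt0 _ /(_ 0); rewrite subn0 subn1 bit_top //.
by rewrite /bit expn0 divn1 => ->.
Qed.

Lemma antipalindromic_lt4 n : antipalindromic n -> n < 4 -> n = 2.
Proof. by case: n => [|[|[|[|]]]]. Qed.

Lemma antipalindromic_lead3 n : antipalindromic n -> 3 <= bit_length n ->
  n %/ 2 ^ (bit_length n - 3) = 4 + 2 * ~~ bit n 1 + ~~ bit n 2.
Proof.
case/antipalindromicP=> n_gt0 _ mirror L_ge3; set L := bit_length n in L_ge3 mirror *.
have /andP[_ n_lt] := bit_length_bounds n_gt0.
have lead_lt8 : n %/ 2 ^ (L - 3) < 8.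
  by rewrite ltn_divLR ?expn_gt0 // -(expnD 2 3) subnKC.
rewrite {1}(three_bits lead_lt8) !bit_divn.
have -> : L - 3 + 2 = L.-1 by lia.
rewrite bit_top // (mirror 1) ?(mirror 2); try lia.
by rewrite !negbK; congr (_ + 2 * bit n _ + bit n _); lia.
Qed.

Lemma mul_1mod4_eqmod8 N B : N %% 4 = 1 -> ~~ odd B -> N * B = B %[mod 8].
Proof.
move=> N_mod4 evenB; have -> : N * B = N %/ 4 * B./2 * 8 + B.
  by rewrite {1}(divn_eq N 4) N_mod4 -{1}(even_halfK evenB); lia.
by rewrite modnMDl.
Qed.

Lemma ratio_window N A B P c t : 0 < P -> 0 < N ->
  t * (c * P) <= A < t.+1 * (c * P) -> t * P <= B < t.+1 * P -> A = N * B ->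
  t * c < N * t.+1 /\ N * t < t.+1 * c.
Proof.
move=> P_gt0 N_gt0 /andP[A_ge A_lt] /andP[B_ge B_lt] defA.
split; rewrite -(ltn_pmul2r P_gt0) -!mulnA.
- by apply: (leq_ltn_trans A_ge); rewrite defA ltn_pmul2l.
- by apply: leq_ltn_trans A_lt; rewrite defA leq_mul2l B_ge orbT.
Qed.

Lemma exp2_even_gap a b c : c <= b <= a -> ~~ odd (a - b) ->
  2 ^ (a - c) = 4 ^ (a - b)./2 * 2 ^ (b - c).
Proof.
move=> /andP[le_cb le_ba] even_ab; have gap2 := even_halfK even_ab.
by rewrite -[4]/(2 ^ 2) -expnM -expnD; congr (2 ^ _); lia.
Qed.

Definition quaternary_repunit (k : nat) : nat := \sum_(i < k) 4 ^ i.

Lemma quaternary_repunitS k : quaternary_repunit k.+1 = 4 * quaternary_repunit k + 1.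
Proof.
rewrite /quaternary_repunit big_ord_recl big_distrr addnC /=.
by congr (_ + _); apply: eq_bigr => i _; rewrite expnS.
Qed.

Lemma quaternary_repunitE k : 3 * quaternary_repunit k + 1 = 4 ^ k.
Proof.
elim: k => [|k IHk]; first by rewrite /quaternary_repunit big_ord0.
by rewrite quaternary_repunitS expnS -IHk; lia.
Qed.

Lemma leq_quaternary_repunit k : k <= quaternary_repunit k.
Proof. by elim: k => // k IHk; rewrite quaternary_repunitS; lia. Qed.

Lemma bit_double_quaternary_repunit k i : i < k.*2 ->
  bit (quaternary_repunit k).*2 i = odd i.
Proof.
elim: k i => [//|k IHk] [|[|i]] lt_ik; rewrite quaternary_repunitS;
  set r := quaternary_repunit k in IHk *.
- by rewrite /bit expn0 divn1 odd_double.
- have -> : (4 * r + 1).*2 = (1 + r * 4) * 2 by lia.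
  by rewrite /bit expn1 mulnK //= oddD oddM andbF.
- have -> : (4 * r + 1).*2 = 2 + r.*2 * 2 ^ 2 by lia.
  by rewrite -[i.+2]/(2 + i) -bit_divn divnDMl // divn_small // add0n IHk //; lia.
Qed.

Lemma bit_length_double_quaternary_repunit k : 0 < k ->
  bit_length (quaternary_repunit k).*2 = k.*2.
Proof.
case: k => // k _; rewrite doubleS; apply: bit_length_eq.
have := quaternary_repunitE k.+1; have := expn_gt0 4 k.
by rewrite !expnS -[4]/(2 ^ 2) -expnM mul2n; lia.
Qed.

Lemma antipalindromic_double_quaternary_repunit k : 0 < k ->
  antipalindromic (quaternary_repunit k).*2.
Proof.
move=> k_gt0; apply/antipalindromicP.
rewrite bit_length_double_quaternary_repunit // odd_double; split=> //.
  by case: k k_gt0 => // k _; rewrite quaternary_repunitS; lia.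
move=> i lt_ik; rewrite !bit_double_quaternary_repunit //; last by lia.
have : odd (k.*2 - 1 - i + i) by rewrite subnK ?subn1 ?odd_pred ?odd_double //; lia.
by rewrite oddD; case: (odd i); case: (odd _).
Qed.

Lemma quaternary_repunit_far_from_pow4 k t e : 4 <= t ->
  ~ (t * 4 ^ e < quaternary_repunit k.+2 * t.+1 /\
     quaternary_repunit k.+2 * t < t.+1 * 4 ^ e).
Proof.
move=> t_ge4 [lo hi]; have := quaternary_repunitE k.+2.
rewrite expnS; set X := 4 ^ k.+1.
have X_ge4 : 4 <= X by rewrite /X expnS leq_pmulr ?expn_gt0.
case: (leqP e k.+1) => [le_ek | lt_ke].
- have : 4 ^ e <= X by apply: leq_pexp2l.
  by nia.
- have : 4 * X <= 4 ^ e by rewrite -expnS leq_pexp2l.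
  by nia.
Qed.

Lemma antipalindromic_quaternary_repunit_divisor k A B :
  antipalindromic A -> antipalindromic B -> A = quaternary_repunit k.+2 * B -> B = 2.
Proof.
move=> antiA antiB defA; set N := quaternary_repunit k.+2 in defA.
have N_gt0 : 0 < N by rewrite /N quaternary_repunitS addn1.
have [B_gt0 evenLB _] := (antipalindromicP B).1 antiB.
have [A_gt0 evenLA _] := (antipalindromicP A).1 antiA.
have B_le_A : B <= A by rewrite defA leq_pmull.
have LB_le_LA := leq_bit_length B_le_A.
have [LB_lt3 | LB_ge3] := ltnP (bit_length B) 3.
  apply: antipalindromic_lt4 => //; have /andP[_ B_lt] := bit_length_bounds B_gt0.
  by rewrite (leq_trans B_lt) // -[4]/(2 ^ 2) leq_exp2l //; lia.
exfalso; set t := 4 + 2 * ~~ bit B 1 + ~~ bit B 2.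
have A_eqmod8 : A = B %[mod 2 ^ 3].
  rewrite defA mul_1mod4_eqmod8 ?(antipalindromic_even antiB) //.
  by rewrite /N quaternary_repunitS; lia.
have leadA : A %/ 2 ^ (bit_length A - 3) = t.
  rewrite antipalindromic_lead3 //; last by lia.
  by rewrite !(bit_eqmod _ A_eqmod8).
have leadB : B %/ 2 ^ (bit_length B - 3) = t by rewrite antipalindromic_lead3.
set e := (bit_length A - bit_length B)./2.
have gap : 2 ^ (bit_length A - 3) = 4 ^ e * 2 ^ (bit_length B - 3).
  apply: exp2_even_gap; first by rewrite LB_ge3 LB_le_LA.
  by rewrite oddB // (negbTE evenLA) (negbTE evenLB).
apply: (@quaternary_repunit_far_from_pow4 k t e); first by rewrite /t -addnA leq_addr.
apply: (@ratio_window N A B (2 ^ (bit_length B - 3))); rewrite ?expn_gt0 //.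
  by rewrite -gap -leadA leq_divM ltn_ceil ?expn_gt0.
by rewrite -leadB leq_divM ltn_ceil ?expn_gt0.
Qed.

Theorem theorem22 :
  forall M : nat, exists N : nat, M < N /\
    exists! AB : nat * nat,
      [/\ antipalindromic AB.1, antipalindromic AB.2 & AB.1 = N * AB.2].
Proof.
move=> M; exists (quaternary_repunit M.+2); split.
  by apply: leq_trans (leq_quaternary_repunit _).
exists ((quaternary_repunit M.+2).*2, 2); split.
  by split; rewrite ?muln2 //; apply: antipalindromic_double_quaternary_repunit.
case=> A B /= [antiA antiB defA].
by rewrite defA (antipalindromic_quaternary_repunit_divisor antiA antiB defA) muln2.
Qed.
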